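(* Let $c\geq 1$ be an odd integer and let $a,b\geq 2$ be coprime integers. Let $\varphi:F(x,y)\to\mathbb{Z}_2=\{1,-1\}$ be the unique nontrivial homomorphism with $\varphi(x)^a\varphi(y)^b=1$ (namely $\varphi(x)=-1,\varphi(y)=1$ if $a$ is even and $b$ odd; $\varphi(x)=1,\varphi(y)=-1$ if $a$ is odd and $b$ even; $\varphi(x)=\varphi(y)=-1$ if $a,b$ are both odd). Then there exists a word $r\in F(x,y)$ with $\delta_x(r)=a$ and $\delta_y(r)=b$ (so that $H^2(K_r;\mathbb{Z})=0$) such that, letting $\beta:\Pi=F(x,y)/N(r)\to\mathbb{Z}_2$ be the homomorphism induced by $\varphi$, one has $H^2(K_r;{}_{\beta}\mathbb{Z})\cong\mathbb{Z}/c\mathbb{Z}$.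
   Context: $F(x,y)$ is the free group on $x,y$; for $r\in F(x,y)$, $\delta_x(r)$ and $\delta_y(r)$ are the exponent sums of $x$ and $y$ in $r$, $N(r)$ is the normal closure of $r$, and $K_r$ is the model two-complex of the presentation $\langle x,y\mid r\rangle$ (one $0$-cell, two $1$-cells, one $2$-cell attached along $r$), with fundamental group $\Pi=F(x,y)/N(r)$. Since $\varphi(r)=\varphi(x)^{\delta_x(r)}\varphi(y)^{\delta_y(r)}=1$, $\varphi$ induces $\beta$ on $\Pi$. $\mathbb{Z}_2$ is identified with $\mathrm{Aut}(\mathbb{Z})$, so $\beta$ is a local integer coefficient system on $K_r$ and $H^2(K_r;{}_{\beta}\mathbb{Z})$ is the corresponding twisted cohomology group. *)

From mathcomp Require Import all_boot all_order all_algebra.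
Set Implicit Arguments. Unset Strict Implicit. Unset Printing Implicit Defensive.
Import Order.TTheory GRing.Theory Num.Theory.
Local Open Scope ring_scope.

(* A letter is a pair (g, i):
   g = false : generator x,  g = true : generator y;
   i = false : the generator itself,  i = true : its inverse.
   A word need not be freely reduced: exponent sums and Fox derivatives
   are invariant under free reduction, so they are well defined on F(x,y). *)
Definition letter := (bool * bool)%type.
Definition word := seq letter.

Definition expsum (g : bool) (r : word) : int :=
  \sum_(l <- r | l.1 == g) (if l.2 then -1 else 1).
Definition delta_x (r : word) : int := expsum false r.
Definition delta_y (r : word) : int := expsum true r.

(* A homomorphism phi : F(x,y) -> Z_2 = {1,-1} is given by its values on the
   generators: phi(x) = (-1)^sx, phi(y) = (-1)^sy. *)
Definition sgnb (s : bool) : int := (-1) ^+ s.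
Definition phi_gen (sx sy : bool) (g : bool) : int := sgnb (if g then sy else sx).

(* Fox derivatives (d r/dx, d r/dy) pushed forward along beta (induced by phi)
   to Z[Z_2] -> Z (each group element acts on Z by the sign phi(.)).
   Uses d(l w) = d l + l . d w, d(x)/dx = 1, d(x^-1)/dx = -x^-1,
   and phi(x^-1) = phi(x) since phi takes values +-1. *)
Fixpoint twisted_fox (sx sy : bool) (r : word) : int * int :=
  match r with
  | [::] => (0, 0)
  | l :: w =>
      let v := phi_gen sx sy l.1 in
      let d := twisted_fox sx sy w in
      let lead := if l.2 then - v else 1 in
      ((if l.1 then 0 else lead) + v * d.1,
       (if l.1 then lead else 0) + v * d.2)
  end.

(* Twisted cellular cochain complex of K_r with coefficients in beta Z:
   C^0 = Z, C^1 = Z^2 (cells x, y), C^2 = Z (cell of r), and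
   delta^1 (f_x, f_y) = beta(dr/dx) f_x + beta(dr/dy) f_y.
   Since K_r is 2-dimensional, H^2(K_r; beta Z) = C^2 / im delta^1. *)
Definition coboundary1 (sx sy : bool) (r : word) (f : int * int) : int :=
  (twisted_fox sx sy r).1 * f.1 + (twisted_fox sx sy r).2 * f.2.

Definition im_coboundary1 (sx sy : bool) (r : word) (z : int) : Prop :=
  exists f : int * int, z = coboundary1 sx sy r f.

(* H^2(K_r; beta Z) = Z / im delta^1 is isomorphic (as abelian group) to Z/cZ:
   there is an additive map g : C^2 = Z -> Z inducing a well-defined, injective
   and surjective homomorphism Z / im delta^1 -> Z / cZ. *)
Definition H2_twisted_iso_Zmod (sx sy : bool) (r : word) (c : int) : Prop :=
  exists g : int -> int,
    (forall u v, g (u + v) = g u + g v) /\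
    (forall u v, im_coboundary1 sx sy r (u - v) <-> (g u == g v %[mod c])%Z) /\
    (forall w, exists u, (g u == w %[mod c])%Z).

(* H^2(K_r; beta Z) is Z modulo the ideal spanned by the two twisted Fox
   derivatives of r, i.e. Z / gcd.  Since the Fox derivative is a crossed
   homomorphism, a power g^n contributes n when beta(g) = 1 but only the parity
   of n when beta(g) = -1.  If both generators are twisted (a, b odd), the
   relator (xy)^c x^(a-c) y^(b-c) has twisted derivatives (c, -c).  If only g
   is twisted (its exponent m even, the exponent n of the other generator h
   odd), the relator h^p g h^q g^(m-1) with p + q = n and p - q = c has
   derivative 0 along g and c along h.  Coprimality of a and b only serves to
   exclude a and b both even. *)

From mathcomp Require Import all_boot all_order all_algebra zify ring.
Import Order.TTheory GRing.Theory Num.Theory.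
Local Open Scope ring_scope.

Fixpoint phi_word (sx sy : bool) (w : word) : int :=
  if w is l :: w' then phi_gen sx sy l.1 * phi_word sx sy w' else 1.

Definition gen_vec (g : bool) (t : int) : int * int :=
  if g then (0, t) else (t, 0).

Definition gen_pow (g : bool) (n : int) : word := nseq `|n|%N (g, n < 0).

Definition word_pow (w : word) (k : nat) : word := flatten (nseq k w).

Lemma signr_eq1 (b : bool) : ((-1) ^+ b == 1 :> int) = ~~ b.
Proof. by case: b. Qed.

Lemma sgnb_exp (s : bool) (n : nat) : sgnb s ^+ n = (-1) ^+ (s && odd n).
Proof. by rewrite /sgnb -exprM -[LHS]signr_odd oddM oddb. Qed.

Lemma sign_mulrn_abs (n : int) : (if n < 0 then -1 else 1) *+ `|n|%N = n.
Proof. by case: n => m /=; rewrite ?mulNrn ?NegzE natz. Qed.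

Lemma coprimez_not_both_even (a b : int) :
  coprimez a b -> ~~ ((2 %| a)%Z && (2 %| b)%Z).
Proof. by rewrite /coprimez -dvdz_gcd => /eqP ->. Qed.

Lemma exists_sum_sub_eq {b c : int} :
  ~~ (2 %| b)%Z -> ~~ (2 %| c)%Z -> exists p q : int, p + q = b /\ p - q = c.
Proof.
by move=> b_odd c_odd; exists ((b + c) %/ 2)%Z, ((b - c) %/ 2)%Z; lia.
Qed.

Section ExponentSums.

Variable g : bool.

Lemma expsum_cat (u w : word) : expsum g (u ++ w) = expsum g u + expsum g w.
Proof. by rewrite /expsum big_cat. Qed.

Lemma expsum_gen_pow (h : bool) (n : int) :
  expsum g (gen_pow h n) = if h == g then n else 0.
Proof.
rewrite /expsum big_nseq_cond /=; case: (h == g) => //.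
by rewrite -[RHS]sign_mulrn_abs; elim: `|n|%N => //= k ->; rewrite mulrS.
Qed.

Lemma expsum_word_pow (w : word) (k : nat) :
  expsum g (word_pow w k) = expsum g w *+ k.
Proof.
elim: k => [|k IH]; first by rewrite /expsum big_nil.
by rewrite [word_pow _ _]/= expsum_cat IH mulrS.
Qed.

End ExponentSums.

Section TwistedFox.

Variables sx sy : bool.
Local Notation phi_gen := (phi_gen sx sy).
Local Notation phi_word := (phi_word sx sy).
Local Notation fox := (twisted_fox sx sy).

Lemma phi_word_cat (u w : word) : phi_word (u ++ w) = phi_word u * phi_word w.
Proof. by elim: u => [|l u IH] /=; rewrite ?mul1r // IH mulrA. Qed.

Lemma twisted_fox_cat (u w : word) :
  fox (u ++ w) = ((fox u).1 + phi_word u * (fox w).1,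
                  (fox u).2 + phi_word u * (fox w).2).
Proof.
elim: u => [|l u IH] /=; first by rewrite !add0r !mul1r; case: (fox w).
by rewrite IH /= !mulrDr !addrA !mulrA.
Qed.

Lemma phi_word_gen_pow (g : bool) (n : int) :
  phi_word (gen_pow g n) = phi_gen g ^+ `|n|%N.
Proof. by rewrite /gen_pow; elim: `|n|%N => //= k ->; rewrite exprS. Qed.

Lemma twisted_fox_gen_pow_trivial (g : bool) (n : int) :
  phi_gen g = 1 -> fox (gen_pow g n) = gen_vec g n.
Proof.
move=> phi_g1; rewrite /gen_pow -[in RHS](sign_mulrn_abs n).
elim: `|n|%N => [|k IH]; first by case: g {phi_g1}.
rewrite /= IH phi_g1 !mul1r mulrS.
by case: g {phi_g1 IH} => /=; rewrite ?add0r ?addr0.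
Qed.

Lemma twisted_fox_gen_pow_sign (g : bool) (n : int) :
  phi_gen g = -1 -> fox (gen_pow g n) = gen_vec g (odd `|n|%N)%:R.
Proof.
move=> phi_gN1; rewrite /gen_pow.
elim: `|n|%N => [|k IH]; first by case: g {phi_gN1}.
rewrite /= IH phi_gN1 mulN1r opprK.
by case: g {phi_gN1 IH}; case: (n < 0); case: (odd k).
Qed.

Lemma phi_word_pow (w : word) (k : nat) :
  phi_word (word_pow w k) = phi_word w ^+ k.
Proof. by elim: k => //= k IH; rewrite phi_word_cat IH exprS. Qed.

Lemma twisted_fox_word_pow (w : word) (k : nat) : phi_word w = 1 ->
  fox (word_pow w k) = ((fox w).1 *+ k, (fox w).2 *+ k).
Proof.
move=> phi_w1; elim: k => //= k IH.
by rewrite twisted_fox_cat IH phi_w1 !mul1r !mulrS.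
Qed.

Lemma im_coboundary1_gcdz (r : word) (z : int) :
  im_coboundary1 sx sy r z <-> (gcdz (fox r).1 (fox r).2 %| z)%Z.
Proof.
rewrite /im_coboundary1 /coboundary1; split.
  by case=> f ->; rewrite rpredD // dvdz_mulr // (dvdz_gcdl, dvdz_gcdr).
case/dvdzP=> q ->; have [u [v <-]] := Bezoutz (fox r).1 (fox r).2.
by exists (q * u, q * v); rewrite /=; ring.
Qed.

Lemma H2_twisted_iso_Zmod_gcdz (r : word) (c : int) :
  gcdz (fox r).1 (fox r).2 = `|c|%N -> H2_twisted_iso_Zmod sx sy r c.
Proof.
move=> gcd_c; exists id; split=> //; split=> [u v|w]; last by exists w.
by rewrite eqz_mod_dvd im_coboundary1_gcdz gcd_c.
Qed.

End TwistedFox.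

Lemma gcdz_gen_vec (g : bool) (t : int) :
  gcdz (gen_vec g t).1 (gen_vec g t).2 = `|t|%N.
Proof. by case: g; rewrite /= (gcd0z, gcdz0). Qed.

Definition relator_odd_odd (k : nat) (a b : int) : word :=
  word_pow [:: (false, false); (true, false)] k ++
  gen_pow false (a - k%:Z) ++ gen_pow true (b - k%:Z).

Lemma delta_relator_odd_odd (k : nat) (a b : int) :
  delta_x (relator_odd_odd k a b) = a /\ delta_y (relator_odd_odd k a b) = b.
Proof.
have expsum_xy g : expsum g [:: (false, false); (true, false)] = 1.
  by rewrite /expsum !big_cons big_nil; case: g.
rewrite /delta_x /delta_y !expsum_cat !expsum_word_pow !expsum_xy.
by rewrite !expsum_gen_pow /=; lia.
Qed.

Lemma twisted_fox_relator_odd_odd (k : nat) (a b : int) :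
  (2 %| a - k%:Z)%Z -> (2 %| b - k%:Z)%Z ->
  twisted_fox true true (relator_odd_odd k a b) = (k%:Z, - k%:Z).
Proof.
move=> a_k_even b_k_even.
have [a_k b_k] : odd `|a - k%:Z|%N = false /\ odd `|b - k%:Z|%N = false by lia.
rewrite !twisted_fox_cat phi_word_pow twisted_fox_word_pow // phi_word_gen_pow.
rewrite !twisted_fox_gen_pow_sign // a_k b_k /= /phi_gen /sgnb expr1.
by rewrite !(mulr0, addr0, mulr1) sub0r mulNrn natz.
Qed.

Definition relator_even_odd (g : bool) (p q m : int) : word :=
  gen_pow (~~ g) p ++ gen_pow g 1 ++ gen_pow (~~ g) q ++ gen_pow g (m - 1).

Lemma expsum_relator_even_odd (g : bool) (p q m : int) :
  expsum g (relator_even_odd g p q m) = m /\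
  expsum (~~ g) (relator_even_odd g p q m) = p + q.
Proof. by rewrite !expsum_cat !expsum_gen_pow; case: g => /=; split; lia. Qed.

Lemma twisted_fox_relator_even_odd (sx sy g : bool) (p q m : int) :
  phi_gen sx sy g = -1 -> phi_gen sx sy (~~ g) = 1 -> (2 %| m)%Z ->
  twisted_fox sx sy (relator_even_odd g p q m) = gen_vec (~~ g) (p - q).
Proof.
move=> phi_g phi_ng m_even.
have m1_odd : odd `|m - 1|%N by lia.
rewrite !twisted_fox_cat !phi_word_gen_pow phi_g phi_ng.
rewrite !(twisted_fox_gen_pow_trivial _ _ (~~ g)) //.
rewrite !(twisted_fox_gen_pow_sign _ _ g) // m1_odd.
by case: g {phi_g phi_ng} => /=; rewrite !expr1n; congr pair; ring.
Qed.

Theorem proposition6p3 (c a b : int) (sx sy : bool) :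
  1 <= c -> ~~ (2 %| c)%Z ->
  2 <= a -> 2 <= b -> coprimez a b ->
  (sx || sy) ->
  (sgnb sx) ^+ `|a|%N * (sgnb sy) ^+ `|b|%N = 1 ->
  exists r : word,
    delta_x r = a /\ delta_y r = b /\ H2_twisted_iso_Zmod sx sy r c.
Proof.
case: c => // k _ c_odd _ _ /coprimez_not_both_even not_both_even.
rewrite !sgnb_exp -signr_addb => nontrivial /eqP; rewrite signr_eq1 => parity.
case: sx sy nontrivial parity => [] [] // _ /= parity.
- have [a_odd b_odd] : ~~ (2 %| a)%Z /\ ~~ (2 %| b)%Z by lia.
  exists (relator_odd_odd k a b); have [-> ->] := delta_relator_odd_odd k a b.
  do 2 split=> //; apply: H2_twisted_iso_Zmod_gcdz.
  by rewrite twisted_fox_relator_odd_odd ?gcdzN; [apply/gcdz_idPl | lia | lia].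
- have [a_even b_odd] : (2 %| a)%Z /\ ~~ (2 %| b)%Z by lia.
  have [p [q [<- pq_c]]] := exists_sum_sub_eq b_odd c_odd.
  exists (relator_even_odd false p q a); rewrite /delta_x /delta_y.
  have [-> ->] := expsum_relator_even_odd false p q a.
  do 2 split=> //; apply: H2_twisted_iso_Zmod_gcdz.
  by rewrite twisted_fox_relator_even_odd // gcdz_gen_vec pq_c.
- have [a_odd b_even] : ~~ (2 %| a)%Z /\ (2 %| b)%Z by lia.
  have [p [q [<- pq_c]]] := exists_sum_sub_eq a_odd c_odd.
  exists (relator_even_odd true p q b); rewrite /delta_x /delta_y.
  have [-> ->] := expsum_relator_even_odd true p q b.
  do 2 split=> //; apply: H2_twisted_iso_Zmod_gcdz.
  by rewrite twisted_fox_relator_even_odd // gcdz_gen_vec pq_c.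
Qed.
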